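(* Let $Y\in\{0,1\}$, $T$, $H$ be random variables on a common probability space. For a random variable (or tuple) $X$, let $R^*(X):=\inf_g \Pr(g(X)\neq Y)$, the infimum over measurable $g$ with values in $\{0,1\}$. Then $$0\le R^*(T)-R^*(T,H)\le\sqrt{\tfrac12\,I(Y;H\mid T)},$$ where $I(Y;H\mid T)$ is the conditional mutual information between $Y$ and $H$ given $T$, measured in nats.
   Context: $R^*(T)$ and $R^*(T,H)$ are the Bayes-optimal 0–1 risks using the trace alone and the trace together with the history. *)

From HB Require Import structures.
From mathcomp Require Import all_boot all_order all_algebra.
From mathcomp Require Import all_classical all_reals all_analysis.
Set Implicit Arguments. Unset Strict Implicit. Unset Printing Implicit Defensive.
Import Order.TTheory GRing.Theory Num.Theory.
Local Open Scope classical_set_scope.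
Local Open Scope ring_scope.

Definition bayes_risk d (Om : measurableType d) (R : realType)
  (P : probability Om R) (Y : Om -> bool)
  dX (X : measurableType dX) (Xv : Om -> X) : \bar R :=
  ereal_inf [set P [set w | g (Xv w) != Y w] |
             g in [set g : X -> bool | measurable_fun setT g]].

Definition pr d (Om : measurableType d) (R : realType)
  (P : probability Om R) (S : set Om) : R := fine (P S).

Definition plogq (R : realType) (a b : R) : R :=
  if a == 0 then 0 else a * ln (a / b).

Definition is_mpartition dX (X : measurableType dX) (A : seq (set X)) : Prop :=
  (forall i, (i < size A)%N -> measurable (nth set0 A i)) /\
  (forall x, exists! i, (i < size A)%N /\ nth set0 A i x).

(* Mutual information (in nats) between the binary Y and the quantized
   observation [Xv in block] for a finite partition A. *)
Definition disc_MI d (Om : measurableType d) (R : realType)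
  (P : probability Om R) (Y : Om -> bool)
  dX (X : measurableType dX) (Xv : Om -> X) (A : seq (set X)) : R :=
  \sum_(y <- [:: false; true]) \sum_(B <- A)
     plogq (pr P ([set w | Y w = y] `&` (Xv @^-1` B)))
           (pr P [set w | Y w = y] * pr P (Xv @^-1` B)).

(* Mutual information I(Y;X) in nats for general random variables
   (Dobrushin/Gelfand-Yaglom-Perez definition: supremum over finite
   measurable partitions of the observation space). *)
Definition mutual_info d (Om : measurableType d) (R : realType)
  (P : probability Om R) (Y : Om -> bool)
  dX (X : measurableType dX) (Xv : Om -> X) : \bar R :=
  ereal_sup [set (disc_MI P Y Xv A)%:E | A in [set A | is_mpartition A]].

(* Conditional mutual information I(Y;H|T) := I(Y;(T,H)) - I(Y;T)
   (chain rule definition; both terms are <= ln 2 since Y is binary). *)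
Definition cond_mutual_info d (Om : measurableType d) (R : realType)
  (P : probability Om R) (Y : Om -> bool)
  dT (TT : measurableType dT) (T : Om -> TT)
  dH (HH : measurableType dH) (H : Om -> HH) : \bar R :=
  (mutual_info P Y (fun w => (T w, H w)) - mutual_info P Y T)%E.

(* Fix a measurable classifier g of (T, H), with risk r_g, and a finite measurable
   partition A of the range of T.  Splitting every block B of A according to the value
   b of g refines A into a partition of the range of (T, H), and by the chain rule the
   discretised mutual information with Y grows by the sum over (B, b) of
   P(T in B, g = b) times the binary KL divergence between P(Y = 1 | T in B, g = b) and
   P(Y = 1 | T in B).  The majority vote on the blocks of A has risk rho_A >= R*(T), and
   rho_A - r_g is at most the sum of P(T in B, g = b) |P(Y = 1 | T in B, g = b) -
   P(Y = 1 | T in B)|.  Jensen's and Pinsker's inequalities then give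
   2 (rho_A - r_g)^2 <= increase, and the supremum over A yields
   I(Y;T) + 2 (R*(T) - r_g)^2 <= I(Y;T,H) whenever r_g <= R*(T).  Hence
   R*(T) - sqrt(I(Y;H|T)/2) is a lower bound of every r_g, and so of R*(T,H). *)

From HB Require Import structures.
From mathcomp Require Import all_boot all_order all_algebra.
From mathcomp Require Import all_classical all_reals all_analysis.
From mathcomp Require Import ring lra zify.
Set Implicit Arguments.
Unset Strict Implicit.
Unset Printing Implicit Defensive.
Import Order.TTheory GRing.Theory Num.Theory.
Local Open Scope classical_set_scope.
Local Open Scope ring_scope.

Section BinaryPinsker.
Context {R : realType}.

Lemma is_derive_ln1B (x : R) : x < 1 ->
  is_derive x 1 (fun t : R => ln (1 - t)) (- (1 - x)^-1).
Proof.
move=> x1.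
have d1B : is_derive x 1 (fun t : R => 1 - t) (-1).
  by have := @is_deriveB R R^o R^o (cst 1) id x 1 0 1 _ _; rewrite sub0r; apply.
have dln : is_derive (1 - x) 1 (@ln R) (1 - x)^-1 by apply: is_derive1_ln; lra.
by have := @is_derive1_comp R _ (fun t => 1 - t) x _ _ dln d1B; rewrite mulrN1.
Qed.

Lemma is_derive_sqr_dist (p x : R) :
  is_derive x 1 (fun t : R => 2 * (p - t) ^+ 2) (4 * (x - p)).
Proof.
have dB : is_derive x 1 (fun t : R => p - t) (-1).
  by have := @is_deriveB R R^o R^o (cst p) id x 1 0 1 _ _; rewrite sub0r; apply.
apply: is_derive_eq (@is_deriveZ R R^o R^o _ 2 x 1 _ (is_deriveM dB dB)) _.
by rewrite /GRing.scale /=; ring.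
Qed.

Lemma nondecreasing_is_derive (G dG : R -> R) (a b : R) : a <= b ->
  (forall x, a <= x <= b -> is_derive x 1 G (dG x)) ->
  (forall x, a <= x <= b -> 0 <= dG x) -> G a <= G b.
Proof.
move=> ab dGE dG_ge0.
have [||c cab E] := @MVT_segment R G dG a b ab.
- by move=> x; rewrite in_itv /= => /andP[ax xb]; apply: dGE; rewrite !ltW.
- apply: derivable_within_continuous => x; rewrite in_itv /= => /dGE dGx.
  exact: ex_derive.
by rewrite -subr_ge0 E mulr_ge0 ?subr_ge0 // dG_ge0 // -in_itv.
Qed.

(* [KL(p || q) - 2 (p - q)^2 = xent_sqr p q - xent_sqr p p], so Pinsker's inequality
   says that [xent_sqr p] is minimal at [p]. *)
Definition xent_sqr (p t : R) : R :=
  - (p * ln t) - (1 - p) * ln (1 - t) - 2 * (p - t) ^+ 2.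

Lemma is_derive_xent_sqr (p x : R) : 0 < x < 1 ->
  is_derive x 1 (xent_sqr p) ((x - p) * (1 - 2 * x) ^+ 2 / (x * (1 - x))).
Proof.
move=> /andP[x0 x1].
have dln : is_derive x 1 (fun t : R => p * ln t) (p * x^-1).
  by have := @is_deriveZ R R^o R^o _ p x 1 _ (is_derive1_ln x0).
have dln1B : is_derive x 1 (fun t : R => (1 - p) * ln (1 - t)) ((1 - p) * - (1 - x)^-1).
  by have := @is_deriveZ R R^o R^o _ (1 - p) x 1 _ (is_derive_ln1B x1).
apply: is_derive_eq (is_deriveB (is_deriveB (is_deriveN dln) dln1B) (is_derive_sqr_dist p x)) _.
by field; apply/andP; split; lra.
Qed.

Lemma xent_sqr_min (p q : R) : 0 < p < 1 -> 0 < q < 1 -> xent_sqr p p <= xent_sqr p q.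
Proof.
move=> /andP[p0 p1] /andP[q0 q1].
pose dG x := (x - p) * (1 - 2 * x) ^+ 2 / (x * (1 - x)).
have [pq|qp] := lerP p q.
  apply: (nondecreasing_is_derive (dG := dG) pq) => x /andP[px xq].
    by apply: is_derive_xent_sqr; apply/andP; split; lra.
  have x1x : 0 < x * (1 - x) by apply: mulr_gt0; lra.
  by apply: divr_ge0 (ltW x1x); rewrite mulr_ge0 ?sqr_ge0 ?subr_ge0.
rewrite -lerN2.
apply: (nondecreasing_is_derive (G := fun t => - xent_sqr p t) (dG := fun x => - dG x)
  (ltW qp)).
  move=> x /andP[qx xp]; apply: is_deriveN; apply: is_derive_xent_sqr.
  by apply/andP; split; lra.
move=> x /andP[qx xp]; have x1x : 0 < x * (1 - x) by apply: mulr_gt0; lra.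
rewrite /dG oppr_ge0 mulr_le0_ge0 ?invr_ge0 ?(ltW x1x) //.
by rewrite mulr_le0_ge0 ?sqr_ge0 ?subr_le0.
Qed.

Lemma ln1B_ge_sqr (q : R) : 0 <= q < 1 -> 2 * q ^+ 2 <= - ln (1 - q).
Proof.
move=> /andP[q0 q1].
pose F (t : R) := - ln (1 - t) - 2 * (0 - t) ^+ 2.
suff : F 0 <= F q by rewrite /F subr0 ln1 !sub0r sqrrN; lra.
apply: (nondecreasing_is_derive (G := F) (dG := fun x => (1 - 2 * x) ^+ 2 / (1 - x))) => //
  x /andP[x0 xq].
  apply: is_derive_eq (is_deriveB (is_deriveN (@is_derive_ln1B x _)) (is_derive_sqr_dist 0 x)) _.
    lra.
  by field; lra.
by rewrite divr_ge0 ?sqr_ge0 // subr_ge0 ltW // (le_lt_trans xq).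
Qed.

Lemma pinsker_bernoulli (p q : R) : 0 <= p <= 1 -> 0 < q < 1 ->
  2 * (p - q) ^+ 2 <= p * ln (p / q) + (1 - p) * ln ((1 - p) / (1 - q)).
Proof.
move=> /andP[p0 p1] /andP[q0 q1].
have [->|pn0] := eqVneq p 0.
  rewrite mul0r add0r subr0 mul1r div1r lnV ?posrE ?subr_gt0 // sub0r sqrrN.
  by apply: ln1B_ge_sqr; rewrite ltW.
have [->|pn1] := eqVneq p 1.
  rewrite subrr mul0r addr0 mul1r div1r lnV ?posrE //.
  by have := @ln1B_ge_sqr (1 - q); rewrite subKr; apply; lra.
have {pn0 p0}p0 : 0 < p by rewrite lt_neqAle eq_sym pn0.
have {pn1 p1}p1 : p < 1 by rewrite lt_neqAle pn1.
have hp : 0 < p < 1 by apply/andP.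
have hq : 0 < q < 1 by apply/andP.
have := xent_sqr_min hp hq; rewrite /xent_sqr subrr expr0n mulr0 subr0.
rewrite !ln_div ?posrE ?subr_gt0 //; lra.
Qed.
End BinaryPinsker.

Section MutualInformationCells.
Context {R : realType}.

Lemma plogqE (a b : R) : plogq a b = a * ln (a / b).
Proof. by rewrite /plogq; case: eqP => [->|//]; rewrite mul0r. Qed.

Definition share (c0 c1 : R) : R := c1 / (c0 + c1).

Lemma mul_share (c0 c1 : R) : 0 <= c0 -> 0 <= c1 -> (c0 + c1) * share c0 c1 = c1.
Proof.
move=> c0_ge0 c1_ge0; have [s0|s_gt0] := eqVneq (c0 + c1) 0.
  by rewrite s0 mul0r; lra.
by rewrite /share mulrC divfK.
Qed.

Lemma plogq_le_div (u s p : R) : 0 <= u -> u <= s -> u <= p -> plogq u (p * s) <= u / p.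
Proof.
move=> u_ge0 us up; rewrite plogqE.
have [->|u_gt0] : u = 0 \/ 0 < u by lra.
  by rewrite !mul0r.
have p_gt0 : 0 < p by lra.
have s_gt0 : 0 < s by lra.
have ratio_gt0 : 0 < u / (p * s) by rewrite divr_gt0 ?mulr_gt0.
have ratio_le : u / (p * s) <= p^-1.
  by rewrite ler_pdivrMr ?mulr_gt0 // mulrA mulVf ?gt_eqF // mul1r.
by rewrite ler_pM2l // ltW // (lt_le_trans (ln_sublinear ratio_gt0) ratio_le).
Qed.

Lemma weighted_pinsker (u0 u1 v0 v1 : R) : 0 <= u0 <= v0 -> 0 <= u1 <= v1 ->
  2 * ((u0 + u1) * (share u0 u1 - share v0 v1) ^+ 2) <=
  u0 * ln (u0 / (u0 + u1) / (v0 / (v0 + v1))) +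
  u1 * ln (u1 / (u0 + u1) / (v1 / (v0 + v1))).
Proof.
move=> /andP[u0_ge0 u0v0] /andP[u1_ge0 u1v1].
have [s0|s_gt0] : u0 + u1 = 0 \/ 0 < u0 + u1 by lra.
  have [-> ->] : u0 = 0 /\ u1 = 0 by lra.
  by rewrite addr0 !mul0r mulr0 addr0.
have [v10|v1_gt0] : v1 = 0 \/ 0 < v1 by lra.
  have u10 : u1 = 0 by lra.
  rewrite v10 u10 /share !addr0 !mul0r subrr expr0n /= !mulr0 !divff ?ln1 ?mulr0 //;
    apply: lt0r_neq0; lra.
have [v00|v0_gt0] : v0 = 0 \/ 0 < v0 by lra.
  have u00 : u0 = 0 by lra.
  rewrite v00 u00 /share !add0r !mul0r !divff ?subrr ?expr0n /= ?ln1 ?mulr0 ?add0r //;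
    apply: lt0r_neq0; lra.
pose p := share u0 u1; pose q := share v0 v1.
have hp : 0 <= p <= 1 by rewrite divr_ge0 ?ler_pdivrMr ?mul1r //=; lra.
have hq : 0 < q < 1 by rewrite divr_gt0 ?ltr_pdivrMr ?mul1r //=; lra.
have -> : u0 / (u0 + u1) = 1 - p by rewrite /p /share; field; lra.
have -> : v0 / (v0 + v1) = 1 - q by rewrite /q /share; field; lra.
rewrite -[u1 / (u0 + u1)]/p -[v1 / (v0 + v1)]/q.
have u0E : (u0 + u1) * (1 - p) = u0 by rewrite /p /share; field; lra.
have u1E : (u0 + u1) * p = u1 by rewrite /p /share; field; lra.
have := ler_wpM2l (ltW s_gt0) (pinsker_bernoulli hp hq).
by rewrite mulrDr [_ * (p * _)]mulrA [_ * ((1 - p) * _)]mulrA u0E u1E -/p -/q; lra.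
Qed.

Definition mi_block (p0 p1 c0 c1 : R) : R :=
  plogq c0 (p0 * (c0 + c1)) + plogq c1 (p1 * (c0 + c1)).

Lemma mi_block_le (p0 p1 c0 c1 : R) : 0 <= c0 <= p0 -> 0 <= c1 <= p1 ->
  mi_block p0 p1 c0 c1 <= c0 / p0 + c1 / p1.
Proof. by move=> /andP[? ?] /andP[? ?]; apply: lerD; apply: plogq_le_div; lra. Qed.

Lemma plogq_ratio (u s v V p : R) : 0 <= u -> u <= s -> u <= v -> v <= V -> v <= p ->
  plogq u (p * s) = u * ln (u / s / (v / V)) + u * ln (v / (p * V)).
Proof.
move=> u_ge0 us uv vV vp; rewrite plogqE.
have [->|u_gt0] : u = 0 \/ 0 < u by lra.
  by rewrite !mul0r addr0.
rewrite -mulrDr -lnM ?posrE; first by congr (_ * ln _); field; apply/and4P; split;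
  apply: lt0r_neq0; lra.
- by apply: divr_gt0; apply: divr_gt0; lra.
- by apply: divr_gt0; [|apply: mulr_gt0]; lra.
Qed.

Lemma mi_block_gain (a0 a1 b0 b1 p0 p1 : R) :
  0 <= a0 -> 0 <= a1 -> 0 <= b0 -> 0 <= b1 -> a0 + b0 <= p0 -> a1 + b1 <= p1 ->
  2 * ((a0 + a1) * (share a0 a1 - share (a0 + b0) (a1 + b1)) ^+ 2 +
       (b0 + b1) * (share b0 b1 - share (a0 + b0) (a1 + b1)) ^+ 2) <=
  mi_block p0 p1 a0 a1 + mi_block p0 p1 b0 b1 - mi_block p0 p1 (a0 + b0) (a1 + b1).
Proof.
move=> a0_ge0 a1_ge0 b0_ge0 b1_ge0 hp0 hp1.
set V := a0 + b0 + (a1 + b1).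
have ka := @weighted_pinsker a0 a1 (a0 + b0) (a1 + b1).
have kb := @weighted_pinsker b0 b1 (a0 + b0) (a1 + b1).
have VE : V = a0 + b0 + (a1 + b1) by [].
rewrite /mi_block (@plogq_ratio a0 (a0 + a1) (a0 + b0) V p0); [|lra..].
rewrite (@plogq_ratio a1 (a0 + a1) (a1 + b1) V p1); [|lra..].
rewrite (@plogq_ratio b0 (b0 + b1) (a0 + b0) V p0); [|lra..].
rewrite (@plogq_ratio b1 (b0 + b1) (a1 + b1) V p1); [|lra..].
rewrite !plogqE; lra.
Qed.

Lemma min_sub_err_le (a0 a1 b0 b1 : R) :
  0 <= a0 -> 0 <= a1 -> 0 <= b0 -> 0 <= b1 ->
  Num.min (a0 + b0) (a1 + b1) - (a0 + b1) <=
  (a0 + a1) * `|share a0 a1 - share (a0 + b0) (a1 + b1)| +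
  (b0 + b1) * `|share b0 b1 - share (a0 + b0) (a1 + b1)|.
Proof.
move=> a0_ge0 a1_ge0 b0_ge0 b1_ge0.
have [V0|V_gt0] : a0 + b0 + (a1 + b1) = 0 \/ 0 < a0 + b0 + (a1 + b1) by lra.
  have [-> -> -> ->] : [/\ a0 = 0, a1 = 0, b0 = 0 & b1 = 0] by split; lra.
  by rewrite !addr0 !mul0r minxx subrr addr0.
set q := share (a0 + b0) (a1 + b1).
have devE c0 c1 : 0 <= c0 -> 0 <= c1 ->
    (c0 + c1) * `|share c0 c1 - q| = `|c1 - (c0 + c1) * q|.
  move=> c0_ge0 c1_ge0.
  by rewrite -{1}(ger0_norm (addr_ge0 c0_ge0 c1_ge0)) -normrM mulrBr mul_share.
rewrite !devE //.
have qV : (a0 + b0 + (a1 + b1)) * q = a1 + b1 by rewrite mul_share ?addr_ge0.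
have eab : a1 - (a0 + a1) * q = - (b1 - (b0 + b1) * q) by lra.
rewrite eab normrN.
have eb_le := ler_norm (b1 - (b0 + b1) * q).
have Neb_le : - (b1 - (b0 + b1) * q) <= `|b1 - (b0 + b1) * q| by rewrite -normrN ler_norm.
have [m01|m10] := leP (a0 + b0) (a1 + b1).
  have q_ge : 1 <= 2 * q by rewrite -(ler_pM2l V_gt0) mulr1 mulrCA qV; lra.
  have : (b0 + b1) * (1 - 2 * q) <= 0 by apply: mulr_ge0_le0; lra.
  lra.
have q_le : 2 * q <= 1 by rewrite -(ler_pM2l V_gt0) mulr1 mulrCA qV; lra.
have : (a0 + a1) * (2 * q - 1) <= 0 by apply: mulr_ge0_le0; lra.
lra.
Qed.

Lemma sqr_sum_le_sum_sqr (I : finType) (w x : I -> R) :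
  (forall i, 0 <= w i) -> \sum_i w i <= 1 ->
  (\sum_i w i * x i) ^+ 2 <= \sum_i w i * x i ^+ 2.
Proof.
move=> w_ge0 w_le1; set M := \sum_i w i * x i.
have : 0 <= \sum_i w i * (x i - M) ^+ 2.
  by apply: sumr_ge0 => i _; rewrite mulr_ge0 ?sqr_ge0.
have E i : w i * (x i - M) ^+ 2 = w i * x i ^+ 2 - 2 * M * (w i * x i) + M ^+ 2 * w i.
  by ring.
rewrite (eq_bigr _ (fun i _ => E i)) big_split sumrB /= -!mulr_sumr -/M.
have : M ^+ 2 * \sum_i w i <= M ^+ 2 by rewrite ler_piMr ?sqr_ge0.
rewrite expr2; lra.
Qed.

Lemma risk_gap_sqr_le_mi_gain (I : finType) (a0 a1 b0 b1 : I -> R) (p0 p1 : R) :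
  (forall i, [/\ 0 <= a0 i, 0 <= a1 i, 0 <= b0 i & 0 <= b1 i]) ->
  (forall i, a0 i + b0 i <= p0) -> (forall i, a1 i + b1 i <= p1) ->
  \sum_i (a0 i + b0 i + (a1 i + b1 i)) <= 1 ->
  let gap := \sum_i (Num.min (a0 i + b0 i) (a1 i + b1 i) - (a0 i + b1 i)) in
  0 <= gap ->
  2 * gap ^+ 2 <= \sum_i (mi_block p0 p1 (a0 i) (a1 i) + mi_block p0 p1 (b0 i) (b1 i)
                          - mi_block p0 p1 (a0 i + b0 i) (a1 i + b1 i)).
Proof.
move=> c_ge0 hp0 hp1 mass_le1 gap gap_ge0.
pose q i := share (a0 i + b0 i) (a1 i + b1 i).
pose w b i := if b then a0 i + a1 i else b0 i + b1 i.
pose dev b i := (if b then share (a0 i) (a1 i) else share (b0 i) (b1 i)) - q i.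
have sum_pairs (F : bool -> I -> R) :
    \sum_(x : bool * I) F x.1 x.2 = \sum_i (F true i + F false i).
  by rewrite -pair_bigA big_bool big_split.
have w_ge0 (x : bool * I) : 0 <= w x.1 x.2.
  by case: x => -[] i /=; have [] := c_ge0 i; rewrite /w => *; apply: addr_ge0.
have gap_le : gap <= \sum_(x : bool * I) w x.1 x.2 * `|dev x.1 x.2|.
  rewrite (sum_pairs (fun b i => w b i * `|dev b i|)); apply: ler_sum => i _.
  by have [] := c_ge0 i; exact: min_sub_err_le.
have jensen := @sqr_sum_le_sum_sqr _ (fun x => w x.1 x.2) (fun x => `|dev x.1 x.2|) w_ge0.
have gain : 2 * \sum_(x : bool * I) w x.1 x.2 * `|dev x.1 x.2| ^+ 2 <=
    \sum_i (mi_block p0 p1 (a0 i) (a1 i) + mi_block p0 p1 (b0 i) (b1 i)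
            - mi_block p0 p1 (a0 i + b0 i) (a1 i + b1 i)).
  rewrite (sum_pairs (fun b i => w b i * `|dev b i| ^+ 2)) mulr_sumr.
  apply: ler_sum => i _.
  rewrite !real_normK ?num_real //.
  by have [] := c_ge0 i; move=> *; exact: mi_block_gain.
have : gap ^+ 2 <= (\sum_(x : bool * I) w x.1 x.2 * `|dev x.1 x.2|) ^+ 2.
  by rewrite !expr2 ler_pM.
suff : \sum_(x : bool * I) w x.1 x.2 <= 1 by move=> /jensen; lra.
rewrite (sum_pairs w); apply: le_trans mass_le1; rewrite le_eqVlt; apply/orP; left.
by apply/eqP; apply: eq_bigr => i _; rewrite /w /=; ring.
Qed.
End MutualInformationCells.

Lemma measurableT_preimage d dX (Om : measurableType d) (X : measurableType dX)
    (f : Om -> X) (B : set X) :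
  measurable_fun setT f -> measurable B -> measurable (f @^-1` B).
Proof. by move=> mf mB; rewrite -[X in measurable X]setTI; exact: mf. Qed.

Section Partitions.
Context {dX : measure_display} {X : measurableType dX}.
Implicit Types (A : seq (set X)) (B : set X).

Lemma mpartition_measurable A : is_mpartition A -> {in A, forall B, measurable B}.
Proof. by move=> [mA _] B /(nthP set0)[i hi <-]; exact: mA. Qed.

Lemma mpartition_block_uniq A B B' x :
  is_mpartition A -> B \in A -> B' \in A -> B x -> B' x -> B = B'.
Proof.
move=> [_ uA] /(nthP set0)[i hi <-] /(nthP set0)[j hj <-] hix hjx.
by have [k [_ uk]] := uA x; rewrite -(uk _ (conj hi hix)) -(uk _ (conj hj hjx)).
Qed.

Lemma is_mpartition_setT : is_mpartition [:: @setT X].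
Proof.
split=> [[|i] // _|x]; first exact: measurableT.
by exists 0%N; split=> // -[|j] [].
Qed.

Definition block_vote A (c : set X -> bool) (x : X) : bool :=
  `[< exists2 B, B \in A & B x /\ c B >].

Lemma block_voteE A c B x : is_mpartition A -> B \in A -> B x -> block_vote A c x = c B.
Proof.
move=> hA BA Bx; apply/asboolP/idP => [[B' B'A [B'x cB']]|cB]; last by exists B.
by rewrite (mpartition_block_uniq hA BA B'A Bx B'x).
Qed.

Lemma measurable_block_vote A c : is_mpartition A -> measurable_fun setT (block_vote A c).
Proof.
move=> hA; apply: (measurable_fun_bool true); rewrite setTI.
have -> : block_vote A c @^-1` [set true] =
    \bigcup_(i in [set i | (i < size A)%N /\ c (nth set0 A i)]) nth set0 A i.
  apply/seteqP; split=> x /=.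
    by move/asboolP=> [_ /(nthP set0)[i hi <-] [hx hc]]; exists i.
  by move=> [i [hi hc] hx]; apply/asboolP; exists (nth set0 A i); rewrite ?mem_nth.
by apply: bigcup_measurable => i [hi _]; apply: (mpartition_measurable hA); rewrite mem_nth.
Qed.
End Partitions.

Section Probability.
Context d (Om : measurableType d) (R : realType) (P : probability Om R).
Implicit Types S E : set Om.

Lemma prE S : measurable S -> P S = (pr P S)%:E.
Proof. by move=> mS; rewrite /pr fineK // fin_num_measure. Qed.

Lemma pr_ge0 S : 0 <= pr P S.
Proof. exact/fine_ge0/measure_ge0. Qed.

Lemma pr_setT : pr P setT = 1.
Proof. by rewrite /pr probability_setT. Qed.

Lemma pr_le S E : measurable S -> measurable E -> S `<=` E -> pr P S <= pr P E.
Proof. by move=> mS mE SE; rewrite -lee_fin -!prE // le_measure ?inE. Qed.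

Lemma prU S E : measurable S -> measurable E -> S `&` E = set0 ->
  pr P (S `|` E) = pr P S + pr P E.
Proof.
move=> mS mE SE0; apply: EFin_inj; rewrite EFinD -!prE //; last exact: measurableU.
exact: measureU.
Qed.

Lemma pr_split_bool (f : Om -> bool) S : measurable_fun setT f -> measurable S ->
  pr P S = pr P (S `&` [set w | f w = true]) + pr P (S `&` [set w | f w = false]).
Proof.
move=> mf mS; have mSf b : measurable (S `&` [set w | f w = b]).
  by apply: measurableI => //; exact: (measurableT_preimage (B := [set b]) mf).
rewrite -prU //; last by apply/seteqP; split=> // w [[_ /= ->] []].
by congr pr; rewrite -setIUr; apply/esym/setIidl => w _ /=; case: (f w); [left|right].
Qed.

Lemma sum_pr_partition dX (X : measurableType dX) (Xv : Om -> X) (A : seq (set X)) S :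
  measurable_fun setT Xv -> is_mpartition A -> measurable S ->
  \sum_(B <- A) pr P (S `&` Xv @^-1` B) = pr P S.
Proof.
move=> mX [mA uA] mS; rewrite (big_nth set0) big_mkord.
pose F (i : 'I_(size A)) := S `&` Xv @^-1` nth set0 A i.
have mF i : measurable (F i) by apply/measurableI/measurableT_preimage/mA.
have tF : trivIset setT F.
  move=> i j _ _ [w [[_ hi] [_ hj]]]; have [k [_ uk]] := uA (Xv w).
  by apply: val_inj; rewrite /= -(uk _ (conj (ltn_ord i) hi)) -(uk _ (conj (ltn_ord j) hj)).
have FU : \big[setU/set0]_(i < size A) F i = S.
  apply/seteqP; split.
    apply: (big_ind (fun U => U `<=` S)) => //; last by move=> i _ w [].
    by move=> U V US VS w [/US|/VS].
  move=> w Sw; have [k [[hk hkw] _]] := uA (Xv w).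
  by rewrite (bigD1 (Ordinal hk)) //=; left.
apply: EFin_inj; rewrite -sumEFin -prE // -[X in P X]FU measure_bigsetU_ord //.
by apply: eq_bigr => i _; apply/esym/prE/mF.
Qed.

Variable Y : Om -> bool.
Hypothesis mY : measurable_fun setT Y.

Definition prY (y : bool) S : R := pr P ([set w | Y w = y] `&` S).

Lemma measurable_label y : measurable [set w | Y w = y].
Proof. exact: (measurableT_preimage (B := [set y]) mY). Qed.

Lemma measurable_mismatch (f : Om -> bool) : measurable_fun setT f ->
  measurable [set w | f w != Y w].
Proof.
move=> mf; have -> : [set w | f w != Y w] =
    (fun w => f w && ~~ Y w || ~~ f w && Y w) @^-1` [set true].
  by apply/seteqP; split=> w /=; case: (f w); case: (Y w).
by apply: measurableT_preimage => //; apply: measurable_or;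
  apply: measurable_and => //; exact: measurable_neg.
Qed.

Lemma pr_label_split S : measurable S -> pr P S = prY false S + prY true S.
Proof.
move=> mS; rewrite (pr_split_bool mY mS) addrC /prY.
by congr (pr P _ + pr P _); rewrite setIC.
Qed.

Lemma disc_MIE dX (X : measurableType dX) (Xv : Om -> X) (A : seq (set X)) :
  measurable_fun setT Xv -> {in A, forall B, measurable B} ->
  disc_MI P Y Xv A = \sum_(B <- A)
    mi_block (pr P [set w | Y w = false]) (pr P [set w | Y w = true])
             (prY false (Xv @^-1` B)) (prY true (Xv @^-1` B)).
Proof.
move=> mX mA; rewrite /disc_MI !big_cons big_nil addr0 -big_split /=.
apply: eq_big_seq => B /mA mB.
by rewrite /mi_block (pr_label_split (measurableT_preimage mX mB)).
Qed.

Lemma prY_le y S : measurable S -> prY y S <= pr P [set w | Y w = y].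
Proof.
move=> mS; have mY_y := measurable_label y.
by apply: pr_le (measurableI _ _ mY_y mS) mY_y _; exact: subIsetl.
Qed.

Lemma disc_MI_le2 dX (X : measurableType dX) (Xv : Om -> X) (A : seq (set X)) :
  measurable_fun setT Xv -> is_mpartition A -> disc_MI P Y Xv A <= 2.
Proof.
move=> mX hA; have mA := mpartition_measurable hA.
have mpre B : B \in A -> measurable (Xv @^-1` B) by move=> /mA; exact: measurableT_preimage.
rewrite disc_MIE //; apply: le_trans (_ : \sum_(B <- A)
    (prY false (Xv @^-1` B) / pr P [set w | Y w = false] +
     prY true (Xv @^-1` B) / pr P [set w | Y w = true]) <= 2).
  by rewrite !big_seq; apply: ler_sum => B /mpre mB; rewrite mi_block_le ?pr_ge0 ?prY_le.
rewrite big_split /= -!mulr_suml /prY.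
rewrite !(sum_pr_partition mX hA (measurable_label _)).
have frac_le1 (x : R) : x / x <= 1.
  by have [->|x0] := eqVneq x 0; rewrite ?mul0r ?divff.
have := frac_le1 (pr P [set w | Y w = false]).
by have := frac_le1 (pr P [set w | Y w = true]); lra.
Qed.

Lemma mutual_info_fin_num dX (X : measurableType dX) (Xv : Om -> X) :
  measurable_fun setT Xv -> mutual_info P Y Xv \is a fin_num.
Proof.
move=> mX.
have lb : ((disc_MI P Y Xv [:: setT])%:E <= mutual_info P Y Xv)%E.
  by apply: ereal_sup_ubound; exists [:: setT] => //; exact: is_mpartition_setT.
have ub : (mutual_info P Y Xv <= 2%:E)%E.
  by apply: ge_ereal_sup => _ [A hA <-]; rewrite lee_fin disc_MI_le2.
by move: lb ub; case: (mutual_info P Y Xv).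
Qed.

Lemma bayes_risk_le dX (X : measurableType dX) (Xv : Om -> X) (g : X -> bool) :
  measurable_fun setT g -> (bayes_risk P Y Xv <= P [set w | g (Xv w) != Y w])%E.
Proof. by move=> mg; apply: ereal_inf_lbound; exists g. Qed.

Lemma bayes_risk_fin_num dX (X : measurableType dX) (Xv : Om -> X) :
  bayes_risk P Y Xv \is a fin_num.
Proof.
have risk_ge0 : (0 <= bayes_risk P Y Xv)%E.
  by apply: le_ereal_inf_tmp => _ [g _ <-]; exact: measure_ge0.
rewrite ge0_fin_numE //; apply: le_lt_trans (bayes_risk_le Xv (measurable_cst false)) _.
by rewrite (prE (measurable_mismatch (measurable_cst false))) ltry.
Qed.

Lemma bayes_risk_le_majority dX (X : measurableType dX) (Xv : Om -> X) (A : seq (set X)) :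
  measurable_fun setT Xv -> is_mpartition A ->
  fine (bayes_risk P Y Xv) <=
  \sum_(B <- A) Num.min (prY false (Xv @^-1` B)) (prY true (Xv @^-1` B)).
Proof.
move=> mX hA.
pose g := block_vote A (fun B => prY false (Xv @^-1` B) < prY true (Xv @^-1` B)).
have mg : measurable_fun setT g by exact: measurable_block_vote.
have merr : measurable [set w | g (Xv w) != Y w].
  exact: measurable_mismatch (measurableT_comp mg mX).
apply: (@le_trans _ _ (pr P [set w | g (Xv w) != Y w])).
  have := bayes_risk_le Xv mg; rewrite (prE merr) => risk_le.
  by rewrite -lee_fin fineK ?bayes_risk_fin_num.
rewrite -(sum_pr_partition mX hA merr) !big_seq; apply: ler_sum => B BA.
rewrite minElt /prY; case: ifP => hc; rewrite le_eqVlt; apply/orP; left; apply/eqP.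
all: congr pr; apply/seteqP; split=> w [hw hB]; split=> //;
  by move: hw; rewrite /= /g (block_voteE _ hA BA hB) hc; case: (Y w).
Qed.
End Probability.

Section SplitPartition.
Context {dT dH : measure_display} {TT : measurableType dT} {HH : measurableType dH}.
Variable g : TT * HH -> bool.
Hypothesis mg : measurable_fun setT g.

Definition split_block (b : bool) (B : set TT) : set (TT * HH) :=
  [set z | B z.1 /\ g z = b].

Definition split_partition (A : seq (set TT)) : seq (set (TT * HH)) :=
  map (split_block true) A ++ map (split_block false) A.

Lemma measurable_split_block b B : measurable B -> measurable (split_block b B).
Proof.
move=> mB; have -> : split_block b B = (B `*` setT) `&` (g @^-1` [set b]).
  by apply/seteqP; split=> z; rewrite /split_block /= => -[]; [|case].
by apply: measurableI; [exact: measurableX | exact: measurableT_preimage].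
Qed.

Lemma nth_split_partition A i : (i < size A + size A)%N ->
  nth set0 (split_partition A) i =
  if (i < size A)%N then split_block true (nth set0 A i)
  else split_block false (nth set0 A (i - size A)).
Proof.
by move=> hi; rewrite nth_cat size_map; case: ltnP => h; rewrite (nth_map set0) //; lia.
Qed.

Lemma is_mpartition_split A : is_mpartition A -> is_mpartition (split_partition A).
Proof.
move=> [mA uA]; rewrite /is_mpartition size_cat !size_map; split=> [i hi|[t h]].
  rewrite nth_split_partition //; case: ltnP => hiA;
    apply: measurable_split_block; apply: mA; lia.
have [k [[hk hkt] uk]] := uA t.
exists (if g (t, h) then k else size A + k)%N; split.
  have hi : ((if g (t, h) then k else size A + k) < size A + size A)%N by case: ifP; lia.
  split=> //; rewrite nth_split_partition //.
  by case hg: (g (t, h)); rewrite ?hk ?ltnNge ?leq_addr ?addKn.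
move=> j [hj]; rewrite nth_split_partition //; case: ltnP => hjA [hjt /= ->].
  exact: uk.
by rewrite (uk (j - size A)%N) ?subnKC //; split=> //; lia.
Qed.
End SplitPartition.

Section InformationGain.
Context d (Om : measurableType d) (R : realType) (P : probability Om R).
Variable Y : Om -> bool.
Hypothesis mY : measurable_fun setT Y.
Context {dT dH : measure_display} {TT : measurableType dT} {HH : measurableType dH}.
Variables (T : Om -> TT) (H : Om -> HH).
Hypotheses (mT : measurable_fun setT T) (mH : measurable_fun setT H).

Local Notation Z := (fun w => (T w, H w)).
Local Notation p0 := (pr P [set w | Y w = false]).
Local Notation p1 := (pr P [set w | Y w = true]).

Let mZ : measurable_fun setT Z := measurable_fun_pair mT mH.

Section Classifier.
Variable g : TT * HH -> bool.
Hypothesis mg : measurable_fun setT g.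

Let cell (y b : bool) (B : set TT) := prY P Y y (Z @^-1` split_block g b B).

Let mgZ : measurable_fun setT (g \o Z) := measurableT_comp mg mZ.

Lemma prY_preimage_cells y B : measurable B ->
  prY P Y y (T @^-1` B) = cell y true B + cell y false B.
Proof.
move=> mB; have mYB := measurableI _ _ (measurable_label mY y) (measurableT_preimage mT mB).
by rewrite /prY (pr_split_bool P mgZ mYB) -!setIA.
Qed.

Lemma pr_mismatch_cells A : is_mpartition A ->
  pr P [set w | g (Z w) != Y w] = \sum_(B <- A) (cell false true B + cell true false B).
Proof.
move=> hA; have merr := measurable_mismatch mY mgZ.
rewrite -(sum_pr_partition P mT hA merr); apply: eq_big_seq => B /(mpartition_measurable hA) mB.
have mcell y b : measurable ([set w | Y w = y] `&` Z @^-1` split_block g b B).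
  apply: measurableI; first exact: measurable_label.
  exact: measurableT_preimage mZ (measurable_split_block mg b mB).
rewrite -prU //.
  congr pr; rewrite /split_block; apply/seteqP; split=> w /=.
    move=> [+ hB]; case: (Y w); case: (g (T w, H w)) => //= _.
      by right; do !split.
    by left; do !split.
  by case=> -[ey [hB hg]]; split; rewrite // ey hg.
by apply/seteqP; split=> // w [[/= -> _] []].
Qed.

Lemma disc_MI_cells A : is_mpartition A ->
  disc_MI P Y Z (split_partition g A) - disc_MI P Y T A = \sum_(B <- A)
    (mi_block p0 p1 (cell false true B) (cell true true B)
     + mi_block p0 p1 (cell false false B) (cell true false B)
     - mi_block p0 p1 (cell false true B + cell false false B)
                      (cell true true B + cell true false B)).
Proof.
move=> hA; have mA := mpartition_measurable hA.
rewrite (disc_MIE P mY mZ (mpartition_measurable (is_mpartition_split mg hA))).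
rewrite (disc_MIE P mY mT mA) big_cat /= !big_map -big_split -sumrB /=.
by apply: eq_big_seq => B /mA mB; rewrite !prY_preimage_cells.
Qed.

Lemma sum_cells A : is_mpartition A ->
  \sum_(B <- A) (cell false true B + cell false false B +
                 (cell true true B + cell true false B)) = 1.
Proof.
move=> hA; rewrite -(pr_setT P) -(sum_pr_partition P mT hA measurableT).
apply: eq_big_seq => B /(mpartition_measurable hA) mB.
by rewrite setTI -!prY_preimage_cells // (pr_label_split P mY (measurableT_preimage mT mB)).
Qed.

Lemma mi_split_gain A : is_mpartition A ->
  pr P [set w | g (Z w) != Y w] <= fine (bayes_risk P Y T) ->
  disc_MI P Y T A + 2 * (fine (bayes_risk P Y T) - pr P [set w | g (Z w) != Y w]) ^+ 2
  <= disc_MI P Y Z (split_partition g A).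
Proof.
move=> hA risk_le; have mA := mpartition_measurable hA.
have seq_ord (F : set TT -> R) : \sum_(B <- A) F B = \sum_(i < size A) F (nth set0 A i).
  by rewrite (big_nth set0) big_mkord.
pose a0 (i : 'I_(size A)) := cell false true (nth set0 A i).
pose a1 (i : 'I_(size A)) := cell true true (nth set0 A i).
pose b0 (i : 'I_(size A)) := cell false false (nth set0 A i).
pose b1 (i : 'I_(size A)) := cell true false (nth set0 A i).
have gap_ge : fine (bayes_risk P Y T) - pr P [set w | g (Z w) != Y w] <=
    \sum_i (Num.min (a0 i + b0 i) (a1 i + b1 i) - (a0 i + b1 i)).
  rewrite sumrB (pr_mismatch_cells hA) seq_ord lerD2r.
  apply: le_trans (bayes_risk_le_majority P mY mT hA) _.
  rewrite seq_ord le_eqVlt; apply/orP; left.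
  apply/eqP/eq_bigr => i _; rewrite !prY_preimage_cells //; apply: mA; exact: mem_nth.
have c_ge0 i : [/\ 0 <= a0 i, 0 <= a1 i, 0 <= b0 i & 0 <= b1 i] by split; exact: pr_ge0.
have hp (y : bool) (i : 'I_(size A)) :
    cell y true (nth set0 A i) + cell y false (nth set0 A i) <= pr P [set w | Y w = y].
  have mB := mA _ (mem_nth set0 (ltn_ord i)).
  by rewrite -prY_preimage_cells // prY_le //; exact: measurableT_preimage.
have mass : \sum_i (a0 i + b0 i + (a1 i + b1 i)) <= 1 by rewrite -(sum_cells hA) seq_ord.
have risk_gap_ge0 : 0 <= fine (bayes_risk P Y T) - pr P [set w | g (Z w) != Y w].
  by rewrite subr_ge0.
have gain := risk_gap_sqr_le_mi_gain c_ge0 (hp false) (hp true) mass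
  (le_trans risk_gap_ge0 gap_ge).
have := disc_MI_cells hA; rewrite seq_ord.
have : (fine (bayes_risk P Y T) - pr P [set w | g (Z w) != Y w]) ^+ 2 <=
       (\sum_i (Num.min (a0 i + b0 i) (a1 i + b1 i) - (a0 i + b1 i))) ^+ 2.
  by rewrite !expr2 ler_pM.
move: gain; rewrite /a0 /a1 /b0 /b1 /=; lra.
Qed.

Lemma mutual_info_gain :
  pr P [set w | g (Z w) != Y w] <= fine (bayes_risk P Y T) ->
  fine (mutual_info P Y T) + 2 * (fine (bayes_risk P Y T) - pr P [set w | g (Z w) != Y w]) ^+ 2
  <= fine (mutual_info P Y Z).
Proof.
move=> risk_le.
have fIT := mutual_info_fin_num P mY mT; have fIZ := mutual_info_fin_num P mY mZ.
suff : (mutual_info P Y T <= (fine (mutual_info P Y Z) -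
    2 * (fine (bayes_risk P Y T) - pr P [set w | g (Z w) != Y w]) ^+ 2)%:E)%E.
  by rewrite -(fineK fIT) lee_fin; lra.
apply: ge_ereal_sup => _ [A hA <-]; rewrite lee_fin.
have : ((disc_MI P Y Z (split_partition g A))%:E <= mutual_info P Y Z)%E.
  by apply: ereal_sup_ubound; exists (split_partition g A) => //; exact: is_mpartition_split.
by rewrite -(fineK fIZ) lee_fin; have := mi_split_gain hA risk_le; lra.
Qed.
End Classifier.

Lemma bayes_risk_pair_le : (bayes_risk P Y Z <= bayes_risk P Y T)%E.
Proof.
apply: le_ereal_inf_tmp => _ [g mg <-]; apply: ereal_inf_lbound.
by exists (g \o fst) => //; exact: measurableT_comp mg measurable_fst.
Qed.

Lemma bayes_risk_pair_ge :
  ((fine (bayes_risk P Y T) -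
    Num.sqrt ((fine (mutual_info P Y Z) - fine (mutual_info P Y T)) / 2))%:E
   <= bayes_risk P Y Z)%E.
Proof.
apply: le_ereal_inf_tmp => _ [g mg <-].
rewrite (prE P (measurable_mismatch mY (measurableT_comp mg mZ))) lee_fin.
set a := fine _; set r := pr P _; set I := _ / 2.
have [a_le|r_lt] := leP a r.
  by have := sqrtr_ge0 I; lra.
have I_ge : (a - r) ^+ 2 <= I.
  by have := mutual_info_gain mg (ltW r_lt); rewrite -/a -/r /I; lra.
have ar_ge0 : 0 <= a - r by lra.
suff : a - r <= Num.sqrt I by lra.
by rewrite -(ger0_norm ar_ge0) -sqrtr_sqr ler_sqrt // (le_trans (sqr_ge0 _) I_ge).
Qed.

End InformationGain.

Theorem mainTheorem4 (d : measure_display) (Om : measurableType d)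
  (R : realType) (P : probability Om R)
  (Y : Om -> bool)
  (dT : measure_display) (TT : measurableType dT) (T : Om -> TT)
  (dH : measure_display) (HH : measurableType dH) (H : Om -> HH)
  (mY : measurable_fun setT Y) (mT : measurable_fun setT T)
  (mH : measurable_fun setT H) :
  let Ibar := cond_mutual_info P Y T H in
  let gap := (bayes_risk P Y T - bayes_risk P Y (fun w => (T w, H w)))%E in
  [/\ (0 <= gap)%E,
      Ibar \is a fin_num &
      (gap <= (Num.sqrt (fine Ibar / 2))%:E)%E].
Proof.
move=> Ibar gap.
have fRT := bayes_risk_fin_num P mY T.
have fRZ := bayes_risk_fin_num P mY (fun w => (T w, H w)).
have fIT := mutual_info_fin_num P mY mT.
have fIZ := mutual_info_fin_num P mY (measurable_fun_pair mT mH).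
have fI : Ibar \is a fin_num by rewrite fin_numB fIZ fIT.
split=> //; first by rewrite subre_ge0 // bayes_risk_pair_le.
have := bayes_risk_pair_ge P mY mT mH.
rewrite /gap /Ibar /cond_mutual_info fineB // -(fineK fRT) -(fineK fRZ) -EFinB !lee_fin.
lra.
Qed.
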